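(* Let $T$ be a light tournament, $z\in V(T)$, and $i\ge 3$. Suppose there are vertices $z_{i-1},z'_{i-1}\in V_{i-1}(z)$ (possibly equal) such that every $s\in V_i(z)$ has an arc $(s,z_{i-1})$ or $(s,z'_{i-1})$ in $T$. Then $U:=N(z_{i-1})\cap V_i(z)$ and $S:=V_i(z)\setminus U$ both induce triangle-free (hence acyclic) subtournaments of $T$.
   Context: A triangle of a tournament is a set of three vertices inducing a directed 3-cycle. An unordered pair $ab$ of vertices is a diagonal if there exist vertices $u,v$ with $\{u,v,a\}$ and $\{u,v,b\}$ both triangles. A triangle is heavy if at least two of its pairs are diagonals; a tournament is light if it has no heavy triangle. For $S\subseteq V(T)$, the in-neighborhood is $N(S)=\{v\notin S: (v,u)\in A(T)\text{ for some }u\in S\}$, and $N(u)=N(\{u\})$. For $z\in V(T)$: $V_1(z)=\{z\}$ and $V_{j+1}(z)=N\big(\bigcup_{k\le j}V_k(z)\big)$ for $j\ge1$; thus $V_j(z)$ is the set of vertices whose shortest directed path to $z$ has length exactly $j-1$. *)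

From mathcomp Require Import all_boot.
Set Implicit Arguments. Unset Strict Implicit. Unset Printing Implicit Defensive.

Section Tournament.
Variable V : finType.

Definition is_tournament (arc : rel V) : Prop :=
  (forall u, ~~ arc u u) /\
  (forall u v, u != v -> arc u v (+) arc v u).

Variable arc : rel V.

Definition is_triangle (a b c : V) : bool :=
  (arc a b && arc b c && arc c a) || (arc b a && arc c b && arc a c).

Definition diagonal (a b : V) : Prop :=
  a != b /\ exists u v, is_triangle u v a /\ is_triangle u v b.

Definition heavy_triangle (a b c : V) : Prop :=
  is_triangle a b c /\
  ((diagonal a b /\ diagonal b c) \/ (diagonal b c /\ diagonal c a) \/
   (diagonal c a /\ diagonal a b)).

Definition light : Prop := forall a b c, ~ heavy_triangle a b c.

Definition Nin (S : {set V}) : {set V} :=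
  [set v | (v \notin S) && [exists u in S, arc v u]].

Definition Nv (u : V) : {set V} := Nin [set u].

(* (layer V_{j+1}(z), union of V_1(z),...,V_{j+1}(z)) *)
Fixpoint Vpair (z : V) (j : nat) : {set V} * {set V} :=
  match j with
  | 0 => ([set z], [set z])
  | j'.+1 => let C := (Vpair z j').2 in (Nin C, C :|: Nin C)
  end.

(* V_j(z) for j >= 1 (V_0(z) := empty, unused) *)
Definition Vlayer (z : V) (j : nat) : {set V} :=
  match j with 0 => set0 | j'.+1 => (Vpair z j').1 end.

Definition triangle_free (X : {set V}) : Prop :=
  forall a b c, a \in X -> b \in X -> c \in X -> ~~ is_triangle a b c.

End Tournament.

From mathcomp Require Import all_boot.

(* Write L_k = (Vpair z k).1 = V_{k+1}(z) and C_k = (Vpair z k).2 for the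
   union of the first k+1 layers.  Two facts about distance layers drive the
   argument: every vertex of L_{k+1} has an out-neighbour in L_k, and no vertex
   of L_{k+2} has an arc into L_k (it would otherwise lie in L_{k+1}).
   Hence, in a tournament, if y ∈ L_{k+1} has the out-neighbour w ∈ L_k, then
   every x ∈ L_{k+2} with x -> y closes the triangle w -> x -> y -> w.
   In a light tournament a set X all of whose members form a triangle with a
   fixed pair {w, y} is triangle-free: a triangle abc inside X would have all
   three pairs diagonal, hence be heavy.  Applying this with y = z_{i-1} gives
   U, and with y = z'_{i-1} gives S, since vertices of S must send their arc
   to z'_{i-1}. *)

Section DistanceLayers.
Context {V : finType} {arc : rel V} {z : V}.

Local Notation layer k := (Vpair arc z k).1.
Local Notation closure k := (Vpair arc z k).2.

Lemma layer_sub_closure k : layer k \subset closure k.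
Proof. by case: k => [|k] /=; [exact: subxx | exact: subsetUr]. Qed.

Lemma closure_sub_succ k : closure k \subset closure k.+1.
Proof. exact: subsetUl. Qed.

Lemma mem_layer_succ {k x} :
  x \in layer k.+1 ->
  x \notin closure k /\ exists2 u, u \in closure k & arc x u.
Proof.
rewrite /= inE => /andP [x_out /existsP [u /andP [u_in xu]]].
by split=> //; exists u.
Qed.

Lemma notin_closure_pred {k x} : x \notin closure k.+1 -> x \notin closure k.
Proof. by apply: contra => x_in; apply: (subsetP (closure_sub_succ k)). Qed.

Lemma layer_succ_of_arc {k x u} :
  x \notin closure k -> u \in closure k -> arc x u -> x \in layer k.+1.
Proof.
move=> x_out u_in xu; rewrite /= inE x_out /=.
by apply/existsP; exists u; rewrite u_in xu.
Qed.

Lemma layer_succ_out_neighbour {k x} :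
  x \in layer k.+1 -> exists2 w, w \in layer k & arc x w.
Proof.
move=> /mem_layer_succ [x_out [u u_in xu]].
case: k x_out u_in => [|k] x_out u_in; first by exists u.
move: u_in; rewrite [closure k.+1]/= inE => /orP [u_in | u_layer]; last by exists u.
(* u in the smaller ball would put x in layer k+1, inside closure (k+1) *)
have x_out' := notin_closure_pred x_out.
by move: x_out; rewrite [closure k.+1]/= in_setU (layer_succ_of_arc x_out' u_in xu) orbT.
Qed.

Lemma no_arc_skip_layer {k x w} :
  x \in layer k.+2 -> w \in layer k -> x != w /\ ~~ arc x w.
Proof.
move=> /mem_layer_succ [x_out _] w_layer.
have w_in : w \in closure k := subsetP (layer_sub_closure k) w w_layer.
have x_out' := notin_closure_pred x_out.
split; first by apply: contraNneq x_out' => ->.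
apply: contra x_out => xw; rewrite [closure k.+1]/= in_setU.
by rewrite (layer_succ_of_arc x_out' w_in xw) orbT.
Qed.

Lemma layer_succ_neq {k x y} :
  x \in layer k.+1 -> y \in layer k -> x != y.
Proof.
move=> /mem_layer_succ [x_out _] y_layer.
by apply: contraNneq x_out => ->; apply: (subsetP (layer_sub_closure k)).
Qed.

End DistanceLayers.

Section LightTournament.
Context {V : finType} {arc : rel V}.
Hypotheses (tour : is_tournament arc) (lightT : light arc).

Lemma triangle_neq {a b c} : is_triangle arc a b c -> a != b.
Proof.
apply: contraTneq => ->.
by rewrite /is_triangle (negbTE (tour.1 b)).
Qed.

Lemma triangle_rotate {a b c} : is_triangle arc a b c -> is_triangle arc b c a.
Proof.
by rewrite /is_triangle => /orP [/andP [/andP [-> ->] ->] | /andP [/andP [-> ->] ->]];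
  rewrite ?orbT.
Qed.

(* If every vertex of X forms a triangle with a fixed pair {u, v}, every pair
   in X is a diagonal, so a triangle inside X would be heavy. *)
Lemma common_pair_triangle_free (X : {set V}) u v :
  (forall x, x \in X -> is_triangle arc u v x) -> triangle_free arc X.
Proof.
move=> uvX a b c aX bX cX; apply/negP => abc.
have diag x y : x \in X -> y \in X -> x != y -> diagonal arc x y.
  by move=> xX yX xy; split=> //; exists u, v; split; apply: uvX.
apply: (lightT a b c); split=> //; left; split; apply: diag => //.
- exact: triangle_neq abc.
- exact: triangle_neq (triangle_rotate abc).
Qed.

(* Vertices of layer k+2 that all point to a common y in layer k+1 induce a
   triangle-free subtournament: they close triangles with y and an
   out-neighbour w of y in layer k. *)
Lemma common_target_triangle_free {z k y} {X : {set V}} :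
  y \in (Vpair arc z k.+1).1 ->
  (forall x, x \in X -> x \in (Vpair arc z k.+2).1 /\ arc x y) ->
  triangle_free arc X.
Proof.
move=> y_layer X_to_y.
have [w w_layer yw] := layer_succ_out_neighbour y_layer.
apply: (@common_pair_triangle_free _ w y) => x /X_to_y [x_layer xy].
have [xw_neq no_xw] := no_arc_skip_layer x_layer w_layer.
have wx : arc w x by move: (tour.2 _ _ xw_neq); rewrite (negbTE no_xw).
by rewrite /is_triangle yw xy wx /= orbT.
Qed.

End LightTournament.

Lemma Vlayer_succ (V : finType) (arc : rel V) z k :
  Vlayer arc z k.+1 = (Vpair arc z k).1.
Proof. by []. Qed.

Lemma in_Nv (V : finType) (arc : rel V) x u :
  x \in Nv arc u = (x != u) && arc x u.
Proof.
rewrite /Nv /Nin !inE; congr (_ && _); apply/existsP/idP => [[v /andP [/set1P -> //]] | xu].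
by exists u; rewrite inE eqxx.
Qed.

Theorem lemma4 (V : finType) (arc : rel V) (z z1 z1' : V) (i : nat) :
  is_tournament arc -> light arc -> 3 <= i ->
  z1 \in Vlayer arc z i.-1 -> z1' \in Vlayer arc z i.-1 ->
  (forall s, s \in Vlayer arc z i -> arc s z1 || arc s z1') ->
  triangle_free arc (Nv arc z1 :&: Vlayer arc z i) /\
  triangle_free arc (Vlayer arc z i :\: (Nv arc z1 :&: Vlayer arc z i)).
Proof.
case: i => [|[|[|k]]] // tour lightT _ z1_layer z1'_layer cover.
rewrite !Vlayer_succ in z1_layer z1'_layer cover *.
split.
- apply: (common_target_triangle_free tour lightT z1_layer) => x.
  by rewrite inE in_Nv => /andP [/andP [_ ->] ->].
- apply: (common_target_triangle_free tour lightT z1'_layer) => x.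
  rewrite in_setD in_setI in_Nv => /andP [notU x_layer]; split=> //.
  (* x lies outside U, so its arc towards z_{i-1} cannot exist *)
  have xz1 : x != z1 := layer_succ_neq x_layer z1_layer.
  by move: notU (cover x x_layer); rewrite xz1 x_layer andbT /=; case: (arc x z1).
Qed.
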